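(* Let $\mathfrak{A}$ be an atomic weakly associative relation algebra, let $\mathfrak{B}=\langle B,T_\kappa,E_{\kappa\lambda}\rangle_{\kappa,\lambda<3}$ be its suitable structure, and let $t=\langle t_0,t_1,t_2\rangle\in B$. Then (i) $E_{10}\cap T^*_0\{t\}=\{\langle t_0,t_0,t_0^{\mathsf d}\rangle\}$, (ii) $E_{01}\cap T^*_1\{t\}=\{\langle t_1,t_1,t_1^{\mathsf d}\rangle\}$, (iii) $E_{12}\cap T^*_2\{t\}=\{\langle t_2^{\mathsf r},t_2,t_2\rangle\}$, (iv) $E_{21}\cap T^*_1\{t\}=\{\langle t_1^{\mathsf r},t_1,t_1\rangle\}$, (v) $E_{02}\cap T^*_2\{t\}=\{\langle \breve{t_2},t_2^{\mathsf d},t_2\rangle\}$, (vi) $E_{20}\cap T^*_0\{t\}=\{\langle t_0,t_0^{\mathsf r},\breve{t_0}\rangle\}$.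
   Context: WA: algebras $\langle A,+,\overline{\phantom{x}},;,\breve{\phantom{x}},1'\rangle$ with $x\cdot y=\overline{\overline{x}+\overline{y}}$, $0'=\overline{1'}$, $1=1'+0'$, $0=\overline{1}$, satisfying for all $x,y,z$: $x+y=y+x$; $x+(y+z)=(x+y)+z$; $\overline{\overline{x}+\overline{y}}+\overline{\overline{x}+y}=x$; $((x\cdot 1');1);1=(x\cdot1');1$; $(x+y);z=x;z+y;z$; $x;1'=x$; $\breve{\breve{x}}=x$; $\breve{(x+y)}=\breve{x}+\breve{y}$; $\breve{(x;y)}=\breve{y};\breve{x}$; $\breve{x};\overline{x;y}+\overline{y}=\overline{y}$. Domain and range: $x^{\mathsf d}=(x;\breve{x})\cdot1'$, $x^{\mathsf r}=(\breve{x};x)\cdot1'$. Suitable structure: $B=\{s\in{}^3\mathrm{At}(\mathfrak{A}): s_2;s_0\ge s_1\}$; $T_\kappa=\{\langle s,t\rangle\in B\times B:s_\kappa=t_\kappa\}$; $E_{\kappa\kappa}=B$; for distinct $\kappa,\lambda$ with third index $\mu$, $E_{\kappa\lambda}=\{s\in B:s_\mu\le1'\}$. $T^*_\kappa(X)=\{y\in B:\exists x\in X\ \langle y,x\rangle\in T_\kappa\}$. *)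

Record WA := {
  car :> Type;
  plus : car -> car -> car;
  compl : car -> car;
  comp : car -> car -> car;
  conv : car -> car;
  one' : car;
  (* derived operations are defined below; axioms are written with them unfolded *)
  ax_plusC : forall x y, plus x y = plus y x;
  ax_plusA : forall x y z, plus x (plus y z) = plus (plus x y) z;
  ax_huntington : forall x y,
      plus (compl (plus (compl x) (compl y))) (compl (plus (compl x) y)) = x;
  ax_wassoc : forall x,
      let one := plus one' (compl one') in
      let meet1' := compl (plus (compl x) (compl one')) in
      comp (comp meet1' one) one = comp meet1' one;
  ax_compDl : forall x y z, comp (plus x y) z = plus (comp x z) (comp y z);
  ax_comp1' : forall x, comp x one' = x;
  ax_convK : forall x, conv (conv x) = x;
  ax_convD : forall x y, conv (plus x y) = plus (conv x) (conv y);
  ax_convM : forall x y, conv (comp x y) = comp (conv y) (conv x);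
  ax_tarski : forall x y,
      plus (comp (conv x) (compl (comp x y))) (compl y) = compl y
}.

Section Ops.
Variable A : WA.
Definition meet (x y : A) : A := compl A (plus A (compl A x) (compl A y)).
Definition diversity : A := compl A (one' A).
Definition top : A := plus A (one' A) diversity.
Definition bot : A := compl A top.
Definition le (x y : A) : Prop := plus A x y = y.
Definition dom (x : A) : A := meet (comp A x (conv A x)) (one' A).
Definition ran (x : A) : A := meet (comp A (conv A x) x) (one' A).

Definition is_atom (a : A) : Prop :=
  a <> bot /\ forall x, le x a -> x = bot \/ x = a.
Definition atomic : Prop :=
  forall x : A, x <> bot -> exists a, is_atom a /\ le a x.

Definition triple := (A * A * A)%type.
Definition t0 (s : triple) : A := fst (fst s).
Definition t1 (s : triple) : A := snd (fst s).
Definition t2 (s : triple) : A := snd s.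
Definition mk3 (a b c : A) : triple := (a, b, c).

Inductive idx := I0 | I1 | I2.
Definition proj (k : idx) (s : triple) : A :=
  match k with I0 => t0 s | I1 => t1 s | I2 => t2 s end.
Definition third (k l : idx) : idx :=
  match k, l with
  | I0, I1 | I1, I0 => I2
  | I0, I2 | I2, I0 => I1
  | _, _ => I0
  end.

Definition Bset (s : triple) : Prop :=
  is_atom (t0 s) /\ is_atom (t1 s) /\ is_atom (t2 s) /\
  le (t1 s) (comp A (t2 s) (t0 s)).
Definition Trel (k : idx) (s t : triple) : Prop :=
  Bset s /\ Bset t /\ proj k s = proj k t.
Definition Eset (k l : idx) (s : triple) : Prop :=
  if (match k, l with I0,I0 | I1,I1 | I2,I2 => true | _,_ => false end)
  then Bset s
  else Bset s /\ le (proj (third k l) s) (one' A).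
Definition Tstar (k : idx) (X : triple -> Prop) (y : triple) : Prop :=
  Bset y /\ exists x, X x /\ Trel k y x.
End Ops.
Arguments dom {A}. Arguments ran {A}. Arguments mk3 {A}.
Arguments t0 {A}. Arguments t1 {A}. Arguments t2 {A}.

(* Everything follows from the cycle law, which for atoms reads: a ≤ b ⨾ c iff c ≤ b˘ ⨾ a iff
   b ≤ a ⨾ c˘. When the coordinate constrained by E is a subidentity atom e, either e is
   composed with the atom fixed by T, and since e ⨾ x ≤ x the remaining coordinate equals
   that atom; or e ≤ b ⨾ c, and the cycle law gives c ≤ b˘ ⨾ e ≤ b˘. In both cases e is then
   pinned down because x^d is the unique subidentity atom e with x ≤ e ⨾ x (dually for x^r).
   That x^d is an atom at all needs weak associativity: a second subidentity atom e' below
   a ⨾ a˘ ≤ e ⨾ a ⨾ a˘ lies below (e ⨾ 1) ⨾ 1 = e ⨾ 1, which forces e ⨾ e' ≠ 0, i.e. e = e'. *)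

From Stdlib Require Import Setoid Classical.

Declare Scope wa_scope.
Notation "x + y" := (plus _ x y) : wa_scope.
Notation "- x" := (compl _ x) : wa_scope.
Notation "x ⊓ y" := (meet _ x y) (at level 40, left associativity) : wa_scope.
Notation "x ⨾ y" := (comp _ x y) (at level 40, left associativity) : wa_scope.
Notation "x ˘" := (conv _ x) (at level 2, left associativity, format "x ˘") : wa_scope.
Notation "x ≤ y" := (le _ x y) (at level 70, no associativity) : wa_scope.
Notation "1'" := (one' _) : wa_scope.
Notation "⊤" := (top _) : wa_scope.
Notation "⊥" := (bot _) : wa_scope.
Local Open Scope wa_scope.

Section BooleanReduct.
Context {A : WA}.
Implicit Types x y z : A.

Lemma joinC x y : x + y = y + x. Proof. apply ax_plusC. Qed.
Lemma joinA x y z : x + (y + z) = x + y + z. Proof. apply ax_plusA. Qed.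
Lemma meetC x y : x ⊓ y = y ⊓ x. Proof. unfold meet. now rewrite joinC. Qed.

Lemma meet_split x y : x ⊓ y + x ⊓ - y = x.
Proof. rewrite joinC. apply ax_huntington. Qed.

Lemma joinACA x y z w : x + y + (z + w) = x + z + (y + w).
Proof. rewrite <- !joinA. f_equal. rewrite !joinA. f_equal. apply joinC. Qed.

(* Split [x] and [-x] along [1'], then regroup the four pieces as a split of [1'] and one of [-1']. *)
Lemma join_compl x : x + - x = ⊤.
Proof.
  transitivity (x ⊓ 1' + x ⊓ - 1' + (- x ⊓ 1' + - x ⊓ - 1')).
  { now rewrite !meet_split. }
  rewrite joinACA, !(meetC _ 1'), !(meetC _ (- 1')), !meet_split.
  reflexivity.
Qed.

Lemma meet_compl x : x ⊓ - x = ⊥.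
Proof. unfold meet, bot. now rewrite join_compl. Qed.

Lemma complK x : - - x = x.
Proof.
  pose proof (meet_split (- - x) x) as Hnn.
  pose proof (meet_split x (- x)) as Hx.
  rewrite (meetC _ (- x)), meet_compl in Hnn. rewrite meet_compl, joinC in Hx.
  now rewrite meetC, Hx in Hnn.
Qed.

Lemma compl_bot : - ⊥ = top A.
Proof. apply complK. Qed.

Lemma join_bot x : x + ⊥ = x.
Proof.
  assert (Htb : ⊤ + ⊥ = top A) by apply join_compl.
  assert (Hsplit : - (⊤ + ⊤) + ⊥ = bot A).
  { pose proof (meet_split ⊥ ⊥) as H.
    rewrite meet_compl in H. unfold meet in H. now rewrite compl_bot in H. }
  assert (Htt : ⊤ + ⊤ = top A).
  { transitivity (top A + ⊤ + (- (⊤ + ⊤) + ⊥)).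
    - now rewrite Hsplit, <- joinA, Htb.
    - now rewrite joinA, join_compl. }
  assert (Hbb : ⊥ + ⊥ = bot A) by (rewrite Htt in Hsplit; exact Hsplit).
  pose proof (meet_split x x) as H. rewrite meet_compl in H.
  now rewrite <- H, <- joinA, Hbb.
Qed.

Lemma meet_idem x : x ⊓ x = x.
Proof. rewrite <- (join_bot (x ⊓ x)), <- (meet_compl x). apply meet_split. Qed.

Lemma join_idem x : x + x = x.
Proof.
  pose proof (meet_idem (- x)) as H. unfold meet in H. rewrite complK in H.
  now rewrite <- (complK (x + x)), H, complK.
Qed.

Lemma le_refl x : x ≤ x. Proof. apply join_idem. Qed.

Lemma le_trans x y z : x ≤ y -> y ≤ z -> x ≤ z.
Proof. unfold le. intros Hxy Hyz. now rewrite <- Hyz, joinA, Hxy. Qed.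

Lemma le_antisym x y : x ≤ y -> y ≤ x -> x = y.
Proof. unfold le. intros Hxy Hyx. now rewrite <- Hxy, <- Hyx at 1; rewrite joinC. Qed.

Lemma join_lub x y z : x ≤ z -> y ≤ z -> x + y ≤ z.
Proof. unfold le. intros Hx Hy. now rewrite <- joinA, Hy, Hx. Qed.

Lemma bot_le x : ⊥ ≤ x. Proof. unfold le. rewrite joinC. apply join_bot. Qed.

Lemma le_top x : x ≤ ⊤.
Proof. unfold le. now rewrite <- (join_compl x), joinA, join_idem. Qed.

Lemma meet_l x y : x ⊓ y ≤ x.
Proof. unfold le. now rewrite <- (meet_split x y) at 2 3; rewrite joinA, join_idem. Qed.

Lemma meet_r x y : x ⊓ y ≤ y. Proof. rewrite meetC. apply meet_l. Qed.

Lemma compl_le x y : x ≤ y -> - y ≤ - x.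
Proof.
  unfold le. intros H. rewrite <- H.
  replace (- (x + y)) with (- x ⊓ - y) by (unfold meet; now rewrite !complK).
  apply meet_l.
Qed.

Lemma meet_glb x y z : z ≤ x -> z ≤ y -> z ≤ x ⊓ y.
Proof.
  intros Hx Hy. rewrite <- (complK z).
  apply compl_le, join_lub; now apply compl_le.
Qed.

Lemma le_of_meet_compl x y : x ⊓ - y = ⊥ -> x ≤ y.
Proof.
  intros H. pose proof (meet_split x y) as E. rewrite H, join_bot in E.
  rewrite <- E. apply meet_r.
Qed.

Lemma le_bot x : x ≤ ⊥ -> x = ⊥.
Proof. intros H. apply le_antisym; [exact H | apply bot_le]. Qed.

Lemma le_neq0 x y : x ≤ y -> x <> ⊥ -> y <> ⊥.
Proof. intros Hxy Hx Hy. subst y. now apply Hx, le_bot. Qed.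

Lemma meetSl x y z : x ≤ y -> x ⊓ z ≤ y ⊓ z.
Proof. intros H. apply meet_glb; [apply (le_trans _ _ _ (meet_l x z) H) | apply meet_r]. Qed.

Lemma meet_idPl x y : x ≤ y -> x ⊓ y = x.
Proof. intros H. apply le_antisym; [apply meet_l | apply meet_glb; auto using le_refl]. Qed.

Lemma meet_top x : x ⊓ ⊤ = x. Proof. apply meet_idPl, le_top. Qed.

End BooleanReduct.

Section RelationLaws.
Context {A : WA}.
Implicit Types x y z e : A.

Lemma convK x : x˘˘ = x. Proof. apply ax_convK. Qed.

Lemma conv_inj x y : x˘ = y˘ -> x = y.
Proof. intros H. now rewrite <- (convK x), H, convK. Qed.

Lemma conv_le x y : x ≤ y -> x˘ ≤ y˘.
Proof. unfold le. intros H. now rewrite <- ax_convD, H. Qed.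

Lemma conv_leP x y : x˘ ≤ y˘ <-> x ≤ y.
Proof. split; [rewrite <- (convK x), <- (convK y) at 2 |]; apply conv_le. Qed.

Lemma compSl x y z : x ≤ y -> x ⨾ z ≤ y ⨾ z.
Proof. unfold le. intros H. now rewrite <- ax_compDl, H. Qed.

Lemma compDr x y z : x ⨾ (y + z) = x ⨾ y + x ⨾ z.
Proof. apply conv_inj. now rewrite ax_convM, !ax_convD, ax_compDl, !ax_convM. Qed.

Lemma compSr x y z : x ≤ y -> z ⨾ x ≤ z ⨾ y.
Proof. unfold le. intros H. now rewrite <- compDr, H. Qed.

Lemma conv_one : (one' A)˘ = 1'.
Proof.
  transitivity (((one' A)˘ ⨾ 1')˘).
  - now rewrite ax_convM, convK, ax_comp1'.
  - rewrite ax_comp1'. apply convK.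
Qed.

Lemma comp1l x : 1' ⨾ x = x.
Proof. apply conv_inj. now rewrite ax_convM, conv_one, ax_comp1'. Qed.

Lemma conv_bot : (bot A)˘ = ⊥.
Proof. apply le_bot. rewrite <- (convK ⊥) at 2. apply conv_le, bot_le. Qed.

Lemma conv_eq0 x : x˘ = ⊥ <-> x = ⊥.
Proof.
  split; intros H; [apply conv_inj; rewrite H |]; subst; now rewrite conv_bot.
Qed.

Lemma conv_meet x y : (x ⊓ y)˘ = x˘ ⊓ y˘.
Proof.
  apply le_antisym.
  - apply meet_glb; apply conv_le; [apply meet_l | apply meet_r].
  - rewrite <- conv_leP, convK.
    apply meet_glb; rewrite <- conv_leP, convK; [apply meet_l | apply meet_r].
Qed.

Lemma cycle_l_eq0 x y z : z ⊓ (x ⨾ y) = ⊥ -> (x˘ ⨾ z) ⊓ y = ⊥.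
Proof.
  intros H. rewrite <- (complK (x ⨾ y)) in H. apply le_of_meet_compl in H.
  apply le_bot. rewrite <- (meet_compl y), (meetC y).
  apply meetSl. apply (le_trans _ _ _ (compSr _ _ x˘ H)). apply ax_tarski.
Qed.

Lemma cycle_l x y z : z ⊓ (x ⨾ y) = ⊥ <-> (x˘ ⨾ z) ⊓ y = ⊥.
Proof.
  split; [apply cycle_l_eq0 |]. intros H.
  rewrite meetC in H. apply cycle_l_eq0 in H. now rewrite convK, meetC in H.
Qed.

Lemma cycle_r x y z : z ⊓ (x ⨾ y) = ⊥ <-> (z ⨾ y˘) ⊓ x = ⊥.
Proof.
  rewrite <- conv_eq0, conv_meet, ax_convM, cycle_l, convK.
  now rewrite <- conv_eq0, conv_meet, ax_convM, !convK.
Qed.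

Lemma comp_subid_l e x : e ≤ 1' -> e ⨾ x ≤ x.
Proof. intros H. rewrite <- (comp1l x) at 2. now apply compSl. Qed.

Lemma comp_subid_r e x : e ≤ 1' -> x ⨾ e ≤ x.
Proof. intros H. rewrite <- (ax_comp1' A x) at 2. now apply compSr. Qed.

Lemma comp_subid_le_meet e e' : e ≤ 1' -> e' ≤ 1' -> e ⨾ e' ≤ e ⊓ e'.
Proof. intros H H'. apply meet_glb; [apply comp_subid_r | apply comp_subid_l]; assumption. Qed.

Lemma wassoc_subid e : e ≤ 1' -> e ⨾ ⊤ ⨾ ⊤ = e ⨾ ⊤.
Proof.
  intros H. pose proof (ax_wassoc A e) as W.
  change ((e ⊓ 1') ⨾ ⊤ ⨾ ⊤ = (e ⊓ 1') ⨾ ⊤) in W.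
  now rewrite meet_idPl in W.
Qed.
End RelationLaws.

Section Atoms.
Context {A : WA}.
Implicit Types a b c e x : A.

Lemma atom_neq0 a : is_atom A a -> a <> ⊥.
Proof. now intros [H _]. Qed.

Lemma atom_le_eq a b : is_atom A a -> is_atom A b -> a ≤ b -> a = b.
Proof. intros [Ha _] [_ Hb] H. now destruct (Hb a H). Qed.

Lemma atom_leP a x : is_atom A a -> a ≤ x <-> a ⊓ x <> ⊥.
Proof.
  intros [Ha Hmin]. split.
  - intros H. now rewrite meet_idPl.
  - intros H. destruct (Hmin _ (meet_l a x)) as [E | E]; [contradiction |].
    rewrite <- E. apply meet_r.
Qed.

Lemma atom_conv a : is_atom A a -> is_atom A a˘.
Proof.
  intros [Ha Hmin]. split; [now rewrite conv_eq0 |].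
  intros x Hx. rewrite <- conv_leP, convK in Hx.
  destruct (Hmin _ Hx) as [E | E]; [left | right].
  - now rewrite <- conv_eq0.
  - now rewrite <- E, convK.
Qed.

Lemma atom_cycle_l a b c : is_atom A a -> is_atom A c -> a ≤ b ⨾ c -> c ≤ b˘ ⨾ a.
Proof.
  intros Ha Hc H. apply atom_leP; [exact Hc |].
  rewrite meetC, <- cycle_l. now apply atom_leP.
Qed.

Lemma atom_cycle_r a b c : is_atom A a -> is_atom A b -> a ≤ b ⨾ c -> b ≤ a ⨾ c˘.
Proof.
  intros Ha Hb H. apply atom_leP; [exact Hb |].
  rewrite meetC, <- cycle_r. now apply atom_leP.
Qed.

Lemma subid_atom_conv e : is_atom A e -> e ≤ 1' -> e˘ = e.
Proof.
  intros He He1.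
  assert (He1' : e˘ ≤ 1') by (rewrite <- conv_one; now apply conv_le).
  assert (Hcomp : e˘ ⨾ e <> ⊥).
  { rewrite <- (meet_idPl (e˘ ⨾ e) 1') by exact (le_trans _ _ _ (comp_subid_l _ _ He1') He1).
    rewrite <- cycle_l, ax_comp1', meet_idem. now apply atom_neq0. }
  symmetry. apply atom_le_eq; auto using atom_conv.
  apply atom_leP; [exact He |]. rewrite meetC.
  exact (le_neq0 _ _ (comp_subid_le_meet _ _ He1' He1) Hcomp).
Qed.

Lemma dom_subid a : dom a ≤ 1'. Proof. apply meet_r. Qed.
Lemma dom_le a : dom a ≤ a ⨾ a˘. Proof. apply meet_l. Qed.
Lemma ran_subid a : ran a ≤ 1'. Proof. apply meet_r. Qed.
Lemma ran_dom a : ran a = dom a˘. Proof. unfold ran, dom. now rewrite convK. Qed.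

Lemma dom_neq0 a : is_atom A a -> dom a <> ⊥.
Proof.
  intros Ha. unfold dom. rewrite <- cycle_r, comp1l, meet_idem. now apply atom_neq0.
Qed.

Lemma dom_unique a e e' : is_atom A a -> is_atom A e -> is_atom A e' ->
  e ≤ dom a -> e' ≤ dom a -> e = e'.
Proof.
  intros Ha He He' Hea He'a.
  assert (He1 : e ≤ 1') by exact (le_trans _ _ _ Hea (dom_subid a)).
  assert (He'1 : e' ≤ 1') by exact (le_trans _ _ _ He'a (dom_subid a)).
  assert (Hae : a ≤ e ⨾ a).
  { rewrite <- (convK a) at 2. apply atom_cycle_r; auto.
    exact (le_trans _ _ _ Hea (dom_le a)). }
  assert (He'e : e' ≤ e ⨾ ⊤).
  { rewrite <- (wassoc_subid e He1).
    apply (le_trans _ _ _ He'a), (le_trans _ _ _ (dom_le a)).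
    apply (le_trans _ _ _ (compSl _ _ a˘ Hae)).
    apply (le_trans _ (e ⨾ ⊤ ⨾ a˘)); [apply compSl, compSr, le_top | apply compSr, le_top]. }
  assert (Hcomp : e ⨾ e' <> ⊥).
  { rewrite <- (subid_atom_conv e), <- (meet_top (e˘ ⨾ e')), <- cycle_l by assumption.
    now apply atom_leP. }
  apply atom_le_eq; auto. apply atom_leP; [exact He |].
  exact (le_neq0 _ _ (comp_subid_le_meet _ _ He1 He'1) Hcomp).
Qed.

Section Atomic.
Context (HA : atomic A).

Lemma dom_atom a : is_atom A a -> is_atom A (dom a).
Proof.
  intros Ha. split; [now apply dom_neq0 |].
  intros x Hx. destruct (classic (x = ⊥)) as [Hx0 | Hx0]; [now left | right].
  destruct (HA x Hx0) as (e & He & Hex).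
  apply le_antisym; [exact Hx |]. apply le_of_meet_compl, NNPP. intros Hc.
  destruct (HA _ Hc) as (e' & He' & He'c).
  assert (Hee' : e = e').
  { apply (dom_unique a); auto.
    - exact (le_trans _ _ _ Hex Hx).
    - exact (le_trans _ _ _ He'c (meet_l _ _)). }
  subst e'. apply (atom_neq0 _ He), le_bot. rewrite <- (meet_compl x).
  apply meet_glb; [exact Hex | exact (le_trans _ _ _ He'c (meet_r _ _))].
Qed.

Lemma ran_atom a : is_atom A a -> is_atom A (ran a).
Proof. intros Ha. rewrite ran_dom. now apply dom_atom, atom_conv. Qed.

Lemma le_dom_comp a : is_atom A a -> a ≤ dom a ⨾ a.
Proof.
  intros Ha. rewrite <- (convK a) at 3.
  apply atom_cycle_r; auto using dom_atom. apply dom_le.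
Qed.

Lemma le_comp_subid_l a b e : is_atom A a -> is_atom A b -> is_atom A e -> e ≤ 1' ->
  b ≤ e ⨾ a <-> b = a /\ e = dom a.
Proof.
  intros Ha Hb He He1. split.
  - intros H.
    assert (Hba : b = a) by exact (atom_le_eq _ _ Hb Ha (le_trans _ _ _ H (comp_subid_l _ _ He1))).
    subst b. split; [reflexivity |].
    apply (dom_unique a); auto using dom_atom, le_refl.
    apply meet_glb; [now apply atom_cycle_r | exact He1].
  - intros [-> ->]. now apply le_dom_comp.
Qed.

Lemma le_comp_subid_r a b e : is_atom A a -> is_atom A b -> is_atom A e -> e ≤ 1' ->
  b ≤ a ⨾ e <-> b = a /\ e = ran a.
Proof.
  intros Ha Hb He He1.
  rewrite <- conv_leP, ax_convM, (subid_atom_conv e), ran_dom, le_comp_subid_l by auto using atom_conv.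
  split; intros [Hba ->]; split; auto; [now apply conv_inj | now subst].
Qed.

Lemma subid_le_comp_dom b c e : is_atom A b -> is_atom A c -> is_atom A e -> e ≤ 1' ->
  e ≤ b ⨾ c <-> c = b˘ /\ e = dom b.
Proof.
  intros Hb Hc He He1. split.
  - intros H.
    assert (Hcb : c = b˘).
    { apply atom_le_eq; auto using atom_conv.
      apply (le_trans _ (b˘ ⨾ e)); [now apply atom_cycle_l | now apply comp_subid_r]. }
    subst c. split; [reflexivity |].
    apply (dom_unique b); auto using dom_atom, le_refl. now apply meet_glb.
  - intros [-> ->]. apply dom_le.
Qed.

Lemma subid_le_comp_ran a c e : is_atom A a -> is_atom A c -> is_atom A e -> e ≤ 1' ->
  e ≤ c ⨾ a <-> c = a˘ /\ e = ran a.
Proof.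
  intros Ha Hc He He1.
  rewrite <- conv_leP, ax_convM, (subid_atom_conv e), ran_dom, subid_le_comp_dom by auto using atom_conv.
  split; intros [Hca ->]; split; auto; [now apply conv_inj | now subst].
Qed.

End Atomic.
End Atoms.

Section SuitableStructure.
Context {A : WA}.
Implicit Types (a : A) (s t : triple A).

Lemma mk3_eq s (x y z : A) : s = mk3 x y z <-> t0 s = x /\ t1 s = y /\ t2 s = z.
Proof.
  destruct s as [[s0 s1] s2]. split; [now intros [= -> -> ->] | now intros (<- & <- & <-)].
Qed.

Lemma Eset_Tstar_single k l m t s : k <> l -> Bset A t ->
  Eset A k l s /\ Tstar A m (fun x => x = t) s <->
  Bset A s /\ proj A (third k l) s ≤ 1' /\ proj A m s = proj A m t.
Proof.
  intros Hkl Ht.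
  assert (HE : Eset A k l s <-> Bset A s /\ proj A (third k l) s ≤ 1').
  { unfold Eset. destruct k, l; first [now exfalso | reflexivity]. }
  rewrite HE. unfold Tstar, Trel. split.
  - intros ((Hs & Hsub) & _ & x & -> & _ & _ & Hk). auto.
  - intros (Hs & Hsub & Hk). split; [auto |]. split; [exact Hs |]. exists t. auto.
Qed.

Context (HA : atomic A).

Local Ltac solve_E_T key :=
  rewrite mk3_eq; unfold Bset; split;
  [ intros ((? & ? & ? & Hle) & ? & ?); rewrite key in Hle by assumption;
    intuition congruence
  | intros (-> & -> & ->); rewrite key;
    intuition auto using dom_atom, ran_atom, atom_conv, dom_subid, ran_subid ].

Lemma E10_T0_spec a s : is_atom A a ->
  Bset A s /\ t2 s ≤ 1' /\ t0 s = a <-> s = mk3 a a (dom a).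
Proof. intros Ha. solve_E_T (le_comp_subid_l HA). Qed.

Lemma E01_T1_spec b s : is_atom A b ->
  Bset A s /\ t2 s ≤ 1' /\ t1 s = b <-> s = mk3 b b (dom b).
Proof. intros Hb. solve_E_T (le_comp_subid_l HA). Qed.

Lemma E12_T2_spec c s : is_atom A c ->
  Bset A s /\ t0 s ≤ 1' /\ t2 s = c <-> s = mk3 (ran c) c c.
Proof. intros Hc. solve_E_T (le_comp_subid_r HA). Qed.

Lemma E21_T1_spec b s : is_atom A b ->
  Bset A s /\ t0 s ≤ 1' /\ t1 s = b <-> s = mk3 (ran b) b b.
Proof. intros Hb. solve_E_T (le_comp_subid_r HA). Qed.

Lemma E02_T2_spec c s : is_atom A c ->
  Bset A s /\ t1 s ≤ 1' /\ t2 s = c <-> s = mk3 c˘ (dom c) c.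
Proof. intros Hc. solve_E_T (subid_le_comp_dom HA). Qed.

Lemma E20_T0_spec a s : is_atom A a ->
  Bset A s /\ t1 s ≤ 1' /\ t0 s = a <-> s = mk3 a (ran a) a˘.
Proof. intros Ha. solve_E_T (subid_le_comp_ran HA). Qed.

End SuitableStructure.

Theorem lemma6 (A : WA) (HA : atomic A) (t : triple A) (Ht : Bset A t) :
  (forall s, (Eset A I1 I0 s /\ Tstar A I0 (fun x => x = t) s) <->
             s = mk3 (t0 t) (t0 t) (dom (t0 t))) /\
  (forall s, (Eset A I0 I1 s /\ Tstar A I1 (fun x => x = t) s) <->
             s = mk3 (t1 t) (t1 t) (dom (t1 t))) /\
  (forall s, (Eset A I1 I2 s /\ Tstar A I2 (fun x => x = t) s) <->
             s = mk3 (ran (t2 t)) (t2 t) (t2 t)) /\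
  (forall s, (Eset A I2 I1 s /\ Tstar A I1 (fun x => x = t) s) <->
             s = mk3 (ran (t1 t)) (t1 t) (t1 t)) /\
  (forall s, (Eset A I0 I2 s /\ Tstar A I2 (fun x => x = t) s) <->
             s = mk3 (conv A (t2 t)) (dom (t2 t)) (t2 t)) /\
  (forall s, (Eset A I2 I0 s /\ Tstar A I0 (fun x => x = t) s) <->
             s = mk3 (t0 t) (ran (t0 t)) (conv A (t0 t))).
Proof.
  pose proof Ht as (Ha & Hb & Hc & _).
  split; [| split; [| split; [| split; [| split]]]]; intros s;
    rewrite Eset_Tstar_single by (discriminate || exact Ht); cbn [third proj].
  - now apply E10_T0_spec.
  - now apply E01_T1_spec.
  - now apply E12_T2_spec.
  - now apply E21_T1_spec.
  - now apply E02_T2_spec.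
  - now apply E20_T0_spec.
Qed.
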